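(* Let $n\ge2$, $k\ge1$, and let $L_1,\dots,L_n$ be commuting indeterminates over $\mathbb{K}=\mathbb{C}(q)$. Let $G_{n,k}=\sum_{i=1}^n L_i^k\prod_{j\ne i}\frac{qL_i-q^{-1}L_j}{L_i-L_j}$. For $1\le i\le\min(k,n)$ let $\Gamma_{k,i}=s_{(k-i+1,1^{i-1})}(L_1,\dots,L_n)$ be the Schur polynomial of the hook partition $(k-i+1,1^{i-1})$, i.e. the character of the irreducible $\mathfrak{gl}_n$-module of highest weight $(k-i+1)\epsilon_1+\epsilon_2+\cdots+\epsilon_i$ with $e^{\epsilon_j}$ replaced by $L_j$; set $\Gamma_{k,i}=0$ if $i>k$. Then $G_{n,k}=\sum_{i=1}^n(-1)^{i-1}q^{n-2i+1}\Gamma_{k,i}$.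
   Context: In the paper $L_i=q^{n-2i+1}K_i^2$ are elements of the commutative subalgebra of $\mathrm{U}_q(\mathfrak{gl}_n)$ generated by the $K_i^{\pm1}$, in which they are algebraically independent. *)

From HB Require Import structures.
From mathcomp Require Import all_boot all_order all_algebra.
From mathcomp Require Import fraction.
From mathcomp.multinomials Require Import mpoly.
From mathcomp Require Import reals.
From mathcomp.real_closed Require Import complex.

Set Implicit Arguments.
Unset Strict Implicit.
Unset Printing Implicit Defensive.
Import Order.TTheory GRing.Theory Num.Theory.
Local Open Scope ring_scope.

Definition Cx (R : realType) := (R[i])%type.
Definition Kq (R : realType) := {fraction {poly Cx R}}.
Definition Frac (R : realType) (n : nat) := {fraction {mpoly Kq R[n]}}.

Definition qK (R : realType) : Kq R := FracField.tofrac ('X : {poly Cx R}).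
(* q and L_i seen in K(L_1,...,L_n) (0-based index i) *)
Definition qF (R : realType) (n : nat) : Frac R n :=
  FracField.tofrac ((qK R)%:MP : {mpoly Kq R[n]}).
Definition Lv (R : realType) (n : nat) (i : 'I_n) : Frac R n :=
  FracField.tofrac ('X_i : {mpoly Kq R[n]}).

Definition Gnk (R : realType) (n k : nat) : Frac R n :=
  \sum_(i < n) (Lv R i ^+ k *
     \prod_(j < n | j != i)
        ((qF R n * Lv R i - (qF R n)^-1 * Lv R j) / (Lv R i - Lv R j))).

(* Schur polynomial s_lam(L_1..L_n) for a partition lam = (lam_0 >= ... >= lam_{n-1})
   given by the bialternant (Weyl character) formula
   det(L_a^(lam_b + n-1-b)) / det(L_a^(n-1-b)). *)
Definition schur (R : realType) (n : nat) (lam : 'I_n -> nat) : Frac R n :=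
  \det (\matrix_(a < n, b < n) (Lv R a ^+ (lam b + (n - 1 - b))%N))
  / \det (\matrix_(a < n, b < n) (Lv R a ^+ (n - 1 - b)%N)).

(* hook partition (k-i+1, 1^(i-1)) with i 1-based, as an n-part sequence *)
Definition hook (n k i : nat) : 'I_n -> nat :=
  fun j => if (nat_of_ord j == 0)%N then (k - i + 1)%N
           else if (j < i)%N then 1%N else 0%N.

(* Gamma_{k,i}, i 1-based, zero when i > k *)
Definition Gamma (R : realType) (n k i : nat) : Frac R n :=
  if (i <= k)%N then @schur R n (@hook n k i) else 0.

From HB Require Import structures.
From mathcomp Require Import all_boot all_order all_algebra.
From mathcomp Require Import fraction.
From mathcomp.multinomials Require Import mpoly.
From mathcomp Require Import reals.
From mathcomp.real_closed Require Import complex.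
From mathcomp Require Import zify ring.

Set Implicit Arguments.
Unset Strict Implicit.
Unset Printing Implicit Defensive.
Import Order.TTheory GRing.Theory Num.Theory.
Local Open Scope ring_scope.

(* Let W = (L_a^(n-1-b)) be the Vandermonde matrix; its inverse has as
   columns the coefficient vectors of the Lagrange basis polynomials l_a of
   the nodes L_1, ..., L_n.  The alternant of the hook (k-i+1, 1^(i-1))
   differs from W in a single column, so Laplace expansion along it gives
   Gamma_{k,i} = (-1)^(i-1) sum_a L_a^(k+n-i) (W^-1)_{i,a}; for i > k the
   new column is a column of W and both sides vanish.  Weighting by
   q^(n-2i+1) and summing over i rebuilds q^(1-n) L_a^k l_a(q^2 L_a), which is
   the a-th summand of G_{n,k}. *)

Lemma expand_det_col' (R : comPzRingType) n (A B : 'M[R]_n) i j :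
  col' i A = col' j B ->
  \det A = (-1) ^+ (i + j) * \sum_a A a i * cofactor B a j.
Proof.
move=> eqAB; rewrite (expand_det_col _ i) mulr_sumr; apply: eq_bigr => a _.
have -> : cofactor A a i = (-1) ^+ (i + j) * cofactor B a j.
  rewrite /cofactor eqAB mulrA -exprD addnACA addnn -muln2.
  by rewrite (exprD _ (i + a)) exprM sqrr_sign mulr1 addnC.
by rewrite mulrCA.
Qed.

Lemma expfz_weight (F : fieldType) (q : F) (n i : nat) : q != 0 -> (i < n)%N ->
  q ^ (n%:Z - 2 * (i.+1)%:Z + 1) = q^-1 ^+ (n - 1) * (q ^+ 2) ^+ (n - 1 - i).
Proof.
move=> q0 lt_in.
have -> : n%:Z - 2 * (i.+1)%:Z + 1 = - (n - 1)%N%:Z + (2 * (n - 1 - i))%N%:Z.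
  by lia.
by rewrite expfzDr // -exprnN exprVn -exprM.
Qed.

Section LagrangeBasis.
Variables (F : fieldType) (n : nat) (x : 'I_n -> F).
Hypothesis x_inj : injective x.

(* qpoly's [lagrange] needs nodes [nat -> F] injective on all of [nat]. *)
Definition lagrange_basis (a : 'I_n) : {poly F} :=
  (\prod_(j < n | j != a) (x a - x j))^-1
    *: \prod_(j < n | j != a) ('X - (x j)%:P).

Lemma card_ord_neq (a : 'I_n) : #|[pred j : 'I_n | j != a]| = n.-1.
Proof. by rewrite cardC1 card_ord. Qed.

Lemma size_lagrange_basis a : (size (lagrange_basis a) <= n)%N.
Proof.
apply: leq_trans (size_scale_leq _ _) _.
rewrite size_prod => [|j _]; last by rewrite polyXsubC_eq0.
rewrite (eq_bigr (fun=> 2%N)) => [|j _]; last by rewrite size_XsubC.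
by rewrite sum_nat_const card_ord_neq; case: n a => [[]|m] //= _; lia.
Qed.

Lemma horner_lagrange_basis a y :
  (lagrange_basis a).[y] = \prod_(j < n | j != a) ((y - x j) / (x a - x j)).
Proof.
rewrite hornerZ horner_prod big_split /= prodfV mulrC.
by under eq_bigr do rewrite hornerXsubC.
Qed.

Lemma lagrange_basis_node a r : (lagrange_basis a).[x r] = (r == a)%:R.
Proof.
rewrite horner_lagrange_basis; have [->|neq_ra] := eqVneq r a.
  by rewrite big1 // => j neq_ja; rewrite divff // subr_eq0 (inj_eq x_inj) eq_sym.
by rewrite (bigD1 r) //= subrr mul0r mul0r.
Qed.

Definition vdm_mx : 'M[F]_n := \matrix_(a < n, b < n) x a ^+ (n - 1 - b).
Definition lagrange_mx : 'M[F]_n :=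
  \matrix_(m < n, a < n) (lagrange_basis a)`_(n - 1 - m).

Lemma lagrange_mx_horner a y :
  \sum_(m < n) y ^+ (n - 1 - m) * lagrange_mx m a = (lagrange_basis a).[y].
Proof.
rewrite (horner_coef_wide _ (size_lagrange_basis a)) (reindex_inj rev_ord_inj).
apply: eq_bigr => m _; rewrite mxE mulrC /=.
by have -> : (n - 1 - (n - m.+1) = m)%N by have := ltn_ord m; lia.
Qed.

Lemma mulmx_vdm_lagrange : vdm_mx *m lagrange_mx = 1%:M.
Proof.
apply/matrixP => r a; rewrite !mxE -lagrange_basis_node -lagrange_mx_horner.
by apply: eq_bigr => m _; rewrite mxE.
Qed.

Lemma mulmx_lagrange_vdm : lagrange_mx *m vdm_mx = 1%:M.
Proof. exact: mulmx1C mulmx_vdm_lagrange. Qed.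

Lemma det_vdm_mx_neq0 : \det vdm_mx != 0.
Proof.
apply/eqP => det0; have := congr1 determinant mulmx_vdm_lagrange.
by rewrite det_mulmx det0 mul0r det1 => /eqP; rewrite eq_sym oner_eq0.
Qed.

Lemma cofactor_vdm_mx a m : cofactor vdm_mx a m = \det vdm_mx * lagrange_mx m a.
Proof.
have adj_vdm : \adj vdm_mx = \det vdm_mx *: lagrange_mx.
  by rewrite -[\adj _]mulmx1 -mulmx_vdm_lagrange mulmxA mul_adj_mx mul_scalar_mx.
by have := congr1 (fun M : 'M_n => M m a) adj_vdm; rewrite !mxE.
Qed.

Lemma sum_exp_lagrange_mx e m : (e < n)%N ->
  \sum_a x a ^+ e * lagrange_mx m a = (nat_of_ord m == n - 1 - e)%N%:R.
Proof.
move=> lt_en; have lt_col : (n - 1 - e < n)%N by lia.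
have := congr1 (fun M : 'M_n => M m (Ordinal lt_col)) mulmx_lagrange_vdm.
rewrite !mxE => <-; apply: eq_bigr => a _; rewrite !mxE mulrC /=.
by congr (_ * x a ^+ _); lia.
Qed.

Lemma lagrange_basis_dilate q a : q != 0 ->
  q^-1 ^+ (n - 1) * (lagrange_basis a).[q ^+ 2 * x a] =
  \prod_(j < n | j != a) ((q * x a - q^-1 * x j) / (x a - x j)).
Proof.
move=> q0; rewrite horner_lagrange_basis subn1 -(card_ord_neq a) -prodr_const.
rewrite -big_split /=; apply: eq_bigr => j _.
by rewrite mulrA; congr (_ / _); field.
Qed.

Lemma sum_weighted_lagrange_mx q a : q != 0 ->
  \sum_(i < n)
     q ^ (n%:Z - 2 * (i.+1)%:Z + 1) * x a ^+ (n - 1 - i) * lagrange_mx i a =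
  \prod_(j < n | j != a) ((q * x a - q^-1 * x j) / (x a - x j)).
Proof.
move=> q0; rewrite -lagrange_basis_dilate // -lagrange_mx_horner mulr_sumr.
apply: eq_bigr => i _; rewrite expfz_weight // (exprMn _ (q ^+ 2)); ring.
Qed.

Section HookAlternant.
Variable k : nat.
Hypothesis n_gt0 : (0 < n)%N.
Local Notation col0 := (Ordinal n_gt0).

Definition hook_mx (m : 'I_n) : 'M[F]_n :=
  \matrix_(a < n, b < n) x a ^+ (hook k m.+1 b + (n - 1 - b)).

Lemma col'_hook_mx m : col' col0 (hook_mx m) = col' m vdm_mx.
Proof.
apply/matrixP => r j; rewrite !mxE; congr (_ ^+ _); rewrite /hook /= /bump /=.
by move: (ltn_ord j) => lt_j; case: leqP => ?; case: ltnP => ?; lia.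
Qed.

Lemma det_hook_mx (m : 'I_n) : (m < k)%N ->
  \det (hook_mx m) =
  (-1) ^+ m * \det vdm_mx * \sum_a x a ^+ (k + (n - 1 - m)) * lagrange_mx m a.
Proof.
move=> lt_mk; rewrite (expand_det_col' (col'_hook_mx m)) -mulrA; congr (_ * _).
rewrite mulr_sumr; apply: eq_bigr => a _; rewrite cofactor_vdm_mx mxE mulrCA.
by congr (_ * (x a ^+ _ * _)); rewrite /hook /=; have := ltn_ord m; lia.
Qed.

Lemma hook_schur_lagrange (m : 'I_n) : (0 < k)%N ->
  (-1) ^+ m * (if (m.+1 <= k)%N then \det (hook_mx m) / \det vdm_mx else 0) =
  \sum_a x a ^+ (k + (n - 1 - m)) * lagrange_mx m a.
Proof.
move=> k_gt0; case: (leqP k m) => [le_km | lt_mk].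
  (* the hook column is then column [m - k] of [vdm_mx] *)
  have lt_exp : (k + (n - 1 - m) < n)%N by have := ltn_ord m; lia.
  by rewrite mulr0 sum_exp_lagrange_mx //; case: eqP => //; lia.
rewrite det_hook_mx // [_ * \det _ * _]mulrAC mulfK ?det_vdm_mx_neq0 //.
by rewrite signrMK.
Qed.

Lemma hook_schur_expansion q : q != 0 -> (0 < k)%N ->
  \sum_(a < n) (x a ^+ k * \prod_(j < n | j != a)
        ((q * x a - q^-1 * x j) / (x a - x j))) =
  \sum_(i < n) ((-1) ^+ i * q ^ (n%:Z - 2 * (i.+1)%:Z + 1)
      * (if (i.+1 <= k)%N then \det (hook_mx i) / \det vdm_mx else 0)).
Proof.
move=> q0 k_gt0.
under [RHS]eq_bigr => i _ do
  rewrite mulrAC mulrC hook_schur_lagrange // mulr_sumr.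
rewrite exchange_big; apply: eq_bigr => a _.
rewrite -sum_weighted_lagrange_mx // mulr_sumr; apply: eq_bigr => i _.
by rewrite exprD; ring.
Qed.

End HookAlternant.

End LagrangeBasis.

Lemma Lv_inj (R : realType) (n : nat) : injective (@Lv R n).
Proof.
move=> i j /eqP; rewrite /Lv tofrac_eq => /eqP /(congr1 (mcoeff U_(i))).
rewrite !mcoeffXU eqxx; case: eqP => [-> // | _ /eqP].
by rewrite oner_eq0.
Qed.

Lemma qF_neq0 (R : realType) (n : nat) : qF R n != 0.
Proof. by rewrite /qF tofrac_eq0 mpolyC_eq0 /qK tofrac_eq0 polyX_eq0. Qed.

Theorem corollary3p4 (R : realType) (n k : nat) :
  (2 <= n)%N -> (1 <= k)%N ->
  Gnk R n k =
  \sum_(i < n) ((-1) ^+ i * qF R n ^ ((n%:Z) - 2 * (i.+1)%:Z + 1)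
                 * Gamma R n k i.+1).
Proof.
move=> n_ge2 k_gt0.
rewrite /Gnk.
by rewrite (hook_schur_expansion (@Lv_inj R n) (ltnW n_ge2) (qF_neq0 R n) k_gt0).
Qed.
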